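(* Fix $d\in(0,\psi_{\max})$. For $\alpha\in(0,1-d/\varphi_{\max})$ define $$v_{\rm in}^*(\alpha,d)=\alpha\beta\gamma\left(s_{\rm in}-\varphi^{-1}\!\left(\frac{d}{1-\alpha}\right)\right),\qquad f_0^*(\alpha,d)=\frac{d\,\big(v_{\rm in}^*(\alpha,d)-\psi^{-1}(d)\big)}{\mu^{-1}(d)}.$$ Then $\alpha\mapsto f_0^*(\alpha,d)$ is strictly concave on $(0,1-d/\varphi_{\max})$.
   Context: All parameters $s_{\rm in},\gamma,\beta,\varphi_{\max},k_s,\rho_{\max},k_v,q_{\min},\mu_{\max}$ are strictly positive. $\varphi(s)=\frac{\varphi_{\max}s}{k_s+s}$, $\rho(v)=\frac{\rho_{\max}v}{k_v+v}$ on $[0,\infty)$, $\mu(q)=\mu_{\max}(1-q_{\min}/q)$ on $[q_{\min},\infty)$, with inverses $\varphi^{-1}:[0,\varphi_{\max})\to[0,\infty)$, $\mu^{-1}:[0,\mu_{\max})\to[q_{\min},\infty)$, $\rho^{-1}:[0,\rho_{\max})\to[0,\infty)$. $\psi_{\max}=\frac{\mu_{\max}\rho_{\max}}{\rho_{\max}+q_{\min}\mu_{\max}}$ and $\psi^{-1}(y)=\rho^{-1}(y\,\mu^{-1}(y))$ for $y\in[0,\psi_{\max})$. The quantity $f_0^*(\alpha,d)$ is the algal harvest rate $d\cdot c^*$ at the coexistence equilibrium of the consortium model under constant controls $(\alpha,d)$. *)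

From Stdlib Require Import Reals Lra.
Open Scope R_scope.

Definition phi (phimax ks s : R) : R := phimax * s / (ks + s).
Definition rho (rhomax kv v : R) : R := rhomax * v / (kv + v).
Definition mu (mumax qmin q : R) : R := mumax * (1 - qmin / q).

(* Explicit inverses (on [0,phimax), [0,rhomax), [0,mumax) respectively). *)
Definition phi_inv (phimax ks y : R) : R := ks * y / (phimax - y).
Definition rho_inv (rhomax kv y : R) : R := kv * y / (rhomax - y).
Definition mu_inv (mumax qmin y : R) : R := mumax * qmin / (mumax - y).

Definition psi_max (mumax rhomax qmin : R) : R :=
  mumax * rhomax / (rhomax + qmin * mumax).

Definition psi_inv (mumax rhomax kv qmin y : R) : R :=
  rho_inv rhomax kv (y * mu_inv mumax qmin y).

Definition v_in_star (sin gamma beta phimax ks alpha d : R) : R :=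
  alpha * beta * gamma * (sin - phi_inv phimax ks (d / (1 - alpha))).

Definition f0_star (sin gamma beta phimax ks rhomax kv qmin mumax alpha d : R) : R :=
  d * (v_in_star sin gamma beta phimax ks alpha d
       - psi_inv mumax rhomax kv qmin d) / mu_inv mumax qmin d.

Definition strictly_concave_on (f : R -> R) (a b : R) : Prop :=
  forall x y t, a < x < b -> a < y < b -> x <> y -> 0 < t < 1 ->
    t * f x + (1 - t) * f y < f (t * x + (1 - t) * y).

(* Once the Monod inverse is written out, [f0_star] becomes, on the admissible
   range of [alpha], an affine function minus a positive multiple of
   [1 / (phimax - d - phimax * alpha)].  The denominator is positive and affine
   in [alpha], and the reciprocal is strictly convex on the positive reals, so
   the difference is strictly concave. *)
From Stdlib Require Import Reals Lra Psatz.
Open Scope R_scope.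

Lemma inv_strict_convex (X Y t : R) : 0 < X -> 0 < Y -> X <> Y -> 0 < t < 1 ->
  / (t * X + (1 - t) * Y) < t / X + (1 - t) / Y.
Proof.
  intros HX HY HXY Ht.
  assert (HZ : 0 < t * X + (1 - t) * Y) by nra.
  assert (Hgap : t / X + (1 - t) / Y - / (t * X + (1 - t) * Y)
    = t * (1 - t) * Rsqr (X - Y) / (X * Y * (t * X + (1 - t) * Y))).
  { unfold Rsqr; field; lra. }
  assert (0 < t * (1 - t) * Rsqr (X - Y) / (X * Y * (t * X + (1 - t) * Y))).
  { apply Rdiv_lt_0_compat.
    - apply Rmult_lt_0_compat; [nra | apply Rsqr_pos_lt; lra].
    - apply Rmult_lt_0_compat; nra. }
  lra.
Qed.

Lemma strictly_concave_on_ext (f g : R -> R) (a b : R) :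
  (forall x, a < x < b -> f x = g x) ->
  strictly_concave_on g a b -> strictly_concave_on f a b.
Proof.
  intros Hfg Hg x y t Hx Hy Hxy Ht.
  assert (a < t * x + (1 - t) * y < b) by nra.
  rewrite !Hfg; auto.
Qed.

Lemma strictly_concave_on_empty (f : R -> R) (a b : R) :
  b <= a -> strictly_concave_on f a b.
Proof. intros Hba x y t Hx; lra. Qed.

Lemma strictly_concave_on_affine_sub_inv (L M N c e a b : R) :
  0 < N -> e <> 0 -> (forall x, a < x < b -> 0 < c - e * x) ->
  strictly_concave_on (fun x => L * x + M - N / (c - e * x)) a b.
Proof.
  intros HN He Hpos x y t Hx Hy Hxy Ht.
  set (X := c - e * x); set (Y := c - e * y).
  assert (HX : 0 < X) by exact (Hpos x Hx).
  assert (HY : 0 < Y) by exact (Hpos y Hy).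
  assert (HXY : X <> Y) by (unfold X, Y; intro; apply Hxy; nra).
  replace (c - e * (t * x + (1 - t) * y)) with (t * X + (1 - t) * Y)
    by (unfold X, Y; ring).
  pose proof (inv_strict_convex X Y t HX HY HXY Ht) as Hinv.
  assert (0 < t * X + (1 - t) * Y) by nra.
  replace (t * (L * x + M - N / X) + (1 - t) * (L * y + M - N / Y))
    with (L * (t * x + (1 - t) * y) + M - N * (t / X + (1 - t) / Y))
    by (field; lra).
  unfold Rdiv at 3. nra.
Qed.

Lemma psi_max_lt_mumax (mumax rhomax qmin : R) :
  0 < mumax -> 0 < rhomax -> 0 < qmin -> psi_max mumax rhomax qmin < mumax.
Proof.
  intros Hm Hr Hq; unfold psi_max.
  assert (Hgap : mumax - mumax * rhomax / (rhomax + qmin * mumax)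
                 = qmin * mumax * mumax / (rhomax + qmin * mumax)) by (field; nra).
  assert (0 < qmin * mumax * mumax / (rhomax + qmin * mumax)).
  { apply Rdiv_lt_0_compat; [repeat apply Rmult_lt_0_compat |]; nra. }
  lra.
Qed.

Lemma mu_inv_pos (mumax qmin y : R) :
  0 < mumax -> 0 < qmin -> y < mumax -> 0 < mu_inv mumax qmin y.
Proof. intros; unfold mu_inv; apply Rdiv_lt_0_compat; nra. Qed.

Lemma f0_star_hyperbolic (sin gamma beta phimax ks rhomax kv qmin mumax alpha d : R) :
  0 < phimax -> 0 <= d -> 0 < mu_inv mumax qmin d ->
  0 < phimax - d - phimax * alpha ->
  let C := d / mu_inv mumax qmin d in
  f0_star sin gamma beta phimax ks rhomax kv qmin mumax alpha d
  = C * beta * gamma * sin * alpha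
    + C * (beta * gamma * ks * d / phimax - psi_inv mumax rhomax kv qmin d)
    - C * beta * gamma * ks * d * (phimax - d) / phimax
      / (phimax - d - phimax * alpha).
Proof.
  intros HP Hd Hmi Hden C; unfold C, f0_star, v_in_star, phi_inv.
  assert (Hpos : 0 < 1 - alpha).
  { apply Rmult_lt_reg_l with phimax; lra. }
  assert (0 < phimax - d / (1 - alpha)).
  { replace (phimax - d / (1 - alpha)) with ((phimax - d - phimax * alpha) / (1 - alpha))
      by (field; lra).
    apply Rdiv_lt_0_compat; lra. }
  field; repeat split; lra.
Qed.

Theorem lemma1 (sin gamma beta phimax ks rhomax kv qmin mumax d : R) :
  0 < sin -> 0 < gamma -> 0 < beta -> 0 < phimax -> 0 < ks ->
  0 < rhomax -> 0 < kv -> 0 < qmin -> 0 < mumax ->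
  0 < d < psi_max mumax rhomax qmin ->
  strictly_concave_on
    (fun alpha => f0_star sin gamma beta phimax ks rhomax kv qmin mumax alpha d)
    0 (1 - d / phimax).
Proof.
  intros Hs Hg Hb HP Hks Hr Hkv Hq Hm [Hd0 Hd1].
  destruct (Rle_or_lt phimax d) as [Hdp | Hdp].
  { apply strictly_concave_on_empty.
    replace (1 - d / phimax) with ((phimax - d) * / phimax) by (field; lra).
    pose proof (Rinv_0_lt_compat phimax HP); nra. }
  pose proof (psi_max_lt_mumax mumax rhomax qmin Hm Hr Hq) as Hdm.
  assert (Hmi : 0 < mu_inv mumax qmin d) by (apply mu_inv_pos; lra).
  assert (Hden : forall alpha, 0 < alpha < 1 - d / phimax ->
                   0 < phimax - d - phimax * alpha).
  { intros alpha [_ Ha].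
    replace (phimax - d - phimax * alpha) with (phimax * (1 - d / phimax - alpha))
      by (field; lra).
    apply Rmult_lt_0_compat; lra. }
  eapply strictly_concave_on_ext.
  - intros alpha Ha. exact (f0_star_hyperbolic sin gamma beta phimax ks rhomax kv
      qmin mumax alpha d HP (Rlt_le _ _ Hd0) Hmi (Hden alpha Ha)).
  - apply strictly_concave_on_affine_sub_inv; [| lra | exact Hden].
    apply Rdiv_lt_0_compat; [| lra].
    repeat apply Rmult_lt_0_compat; try lra.
    apply Rinv_0_lt_compat; exact Hmi.
Qed.
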